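(* Let $k\ge 2$ be an integer. For every real $r$, the polynomial $x^k-x^{k-1}-1$ has at most two complex roots $z$ with $|z|=r$. *)

From mathcomp Require Import all_boot all_order all_algebra.
From mathcomp Require Import complex.
Set Implicit Arguments. Unset Strict Implicit. Unset Printing Implicit Defensive.
Import Order.TTheory GRing.Theory Num.Theory.
Local Open Scope ring_scope.

Definition trinom (C : nzRingType) (k : nat) : {poly C} :=
  'X^k - 'X^(k.-1) - 1.

From mathcomp Require Import all_boot all_order all_algebra.
From mathcomp Require Import complex ring.
Set Implicit Arguments. Unset Strict Implicit. Unset Printing Implicit Defensive.
Import Order.TTheory GRing.Theory Num.Theory.
Local Open Scope ring_scope.

(* A root z of x^k - x^(k-1) - 1 satisfies z^(k-1) (z - 1) = 1, so
   |z - 1| = |z|^(1-k) is determined by |z|.  Hence the roots on the circle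
   |z| = r also lie on a circle centred at 1; two circles with real centres
   0 and 1 meet in at most a pair of complex-conjugate points. *)

Lemma root_trinom (C : nzRingType) (k : nat) (z : C) : (0 < k)%N ->
  root (trinom C k) z = (z ^+ k.-1 * (z - 1) == 1).
Proof.
move=> k_gt0; rewrite /root /trinom !hornerE !hornerXn -[in z ^+ k](prednK k_gt0).
by rewrite exprSr mulrBr mulr1 subr_eq0.
Qed.

Lemma normr_subr1_trinom (C : numFieldType) (n : nat) (z : C) :
  z ^+ n * (z - 1) = 1 -> `|z - 1| = `|z| ^- n.
Proof.
by move=> /(congr1 Num.norm); rewrite normrM normrX normr1 => /mulr1_eq.
Qed.

Lemma normr_subr1_conj (C : numClosedFieldType) (z w : C) :
  `|z| = `|w| -> `|z - 1| = `|w - 1| -> w = z \/ w = z^*.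
Proof.
move=> eq_norm eq_norm1.
have normB1 (a : C) : `|a - 1| ^+ 2 = `|a| ^+ 2 - (a + a^*) + 1.
  by rewrite !normCK rmorphB rmorph1; ring.
have eq_re : z + z^* = w + w^*.
  by move: (normB1 z); rewrite eq_norm eq_norm1 normB1 => /addIr /addrI /oppr_inj.
have eq_sq : z * z^* = w * w^* by rewrite -!normCK eq_norm.
have : (w - z) * (w - z^*) = 0.
  have -> : (w - z) * (w - z^*) = w * w - w * (z + z^*) + z * z^* by ring.
  by rewrite eq_re eq_sq; ring.
by move/eqP; rewrite mulf_eq0 !subr_eq0 => /orP[] /eqP; [left | right].
Qed.

Lemma trinom_roots_eq_normr (C : numClosedFieldType) (n : nat) (z w : C) :
  z ^+ n * (z - 1) = 1 -> w ^+ n * (w - 1) = 1 -> `|z| = `|w| ->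
  w = z \/ w = z^*.
Proof.
move=> /normr_subr1_trinom z1 /normr_subr1_trinom w1 eq_norm.
by apply: normr_subr1_conj; rewrite // z1 w1 eq_norm.
Qed.

Theorem mainTheorem5 (R : rcfType) (k : nat) (hk : (2 <= k)%N) (r : R)
  (s : seq R[i]) :
  uniq s ->
  (forall z, z \in s -> root (trinom R[i] k) z /\ `|z| = (r%:C)%C) ->
  (size s <= 2)%N.
Proof.
move=> uniq_s s_roots.
have k_gt0 : (0 < k)%N by apply: leq_trans hk.
have s_eq z : z \in s -> z ^+ k.-1 * (z - 1) = 1 /\ `|z| = (r%:C)%C.
  by case/s_roots; rewrite root_trinom // => /eqP.
case: s uniq_s s_roots s_eq => // x t uniq_s _ s_eq.
have [x_root x_norm] := s_eq x (mem_head _ _).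
apply: (uniq_leq_size (s2 := [:: x; x^*])) => // w /s_eq[w_root w_norm].
have [-> | ->] := trinom_roots_eq_normr x_root w_root (etrans x_norm (esym w_norm)).
  by rewrite mem_head.
by rewrite !inE eqxx orbT.
Qed.
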